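(* Let $\Phi=[\mathbf a_1,\dots,\mathbf a_k]\in\mathbb R^{m\times k}$ have full column rank, let $\mathbf z\in\mathbb R^k$, and let $\mathbf w^\perp\in\mathbb R^m$ be nonzero and orthogonal to the range of $\Phi$; set $\mathbf y=\Phi\mathbf z+\mathbf w^\perp$. Let $I\subsetneq\{1,\dots,k\}$ be a proper subset and $\mathbf P$ the orthogonal projection onto the orthogonal complement of $\mathrm{span}\{\mathbf a_i: i\in I\}$ (the identity if $I=\emptyset$). Then $$\max_{j\in\{1,\dots,k\}}\frac{|\mathbf a_j^T\mathbf P\mathbf y|^2}{\|\mathbf P\mathbf y\|^2}\ \ge\ \frac{\sigma_{\min}^4(\Phi)\,z_{\min}^2}{\sigma_{\max}^2(\Phi)\,k\,z_{\min}^2+\|\mathbf w^\perp\|^2},$$ where $z_{\min}=\min_{j}|z_j|$ and $\sigma_{\min}(\Phi),\sigma_{\max}(\Phi)$ are the smallest and largest singular values of $\Phi$.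
   Context: All vectors and matrices are real; $\mathbf a^T$ denotes transpose. *)

From HB Require Import structures.
From mathcomp Require Import all_boot all_order all_algebra.
Set Implicit Arguments. Unset Strict Implicit. Unset Printing Implicit Defensive.
Import Order.TTheory GRing.Theory Num.Theory.
Local Open Scope ring_scope.

Section Defs.
Variable R : rcfType.

Definition sqnorm {m : nat} (v : 'cV[R]_m) : R := (v^T *m v) 0 0.

Definition dotv {m : nat} (a v : 'cV[R]_m) : R := (a^T *m v) 0 0.

Definition orth_proj {m : nat} (P : 'M[R]_m) (S : 'cV[R]_m -> Prop) : Prop :=
  [/\ P^T = P, P *m P = P & forall v, P *m v = v <-> S v].

(* s is the smallest singular value of Phi : s >= 0 and s^2 is the smallest
   eigenvalue of Phi^T Phi. *)
Definition is_sigma_min {m k : nat} (Phi : 'M[R]_(m, k)) (s : R) : Prop :=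
  [/\ 0 <= s, eigenvalue (Phi^T *m Phi) (s ^+ 2)
    & forall e, eigenvalue (Phi^T *m Phi) e -> s ^+ 2 <= e].

Definition is_sigma_max {m k : nat} (Phi : 'M[R]_(m, k)) (s : R) : Prop :=
  [/\ 0 <= s, eigenvalue (Phi^T *m Phi) (s ^+ 2)
    & forall e, eigenvalue (Phi^T *m Phi) e -> e <= s ^+ 2].

(* z_min = min_j |z_j| (the minimum of the nonempty list; 0 if k = 0) *)
Definition zmin {k : nat} (z : 'cV[R]_k) : R :=
  let s := [seq `|z i 0| | i <- enum 'I_k] in foldr Num.min (head 0 s) s.

End Defs.

From HB Require Import structures.
From mathcomp Require Import all_boot all_order all_algebra.
From mathcomp Require Import complex ring lra.
Import Order.TTheory GRing.Theory Num.Theory.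
Set Implicit Arguments. Unset Strict Implicit. Unset Printing Implicit Defensive.
Local Open Scope ring_scope.

(* Write J for the complement of I, x = z_J (z with its I-coordinates zeroed),
   v = P Phi x and g = Phi^T P y.  The argument runs as follows.
   - P annihilates the columns indexed by I and fixes the noise w, so
     P y = v + w with v orthogonal to w: |P y|^2 = |v|^2 + |w|^2.
   - P Phi x = Phi (x - t) with t supported on I, hence (Rayleigh bound)
     |v|^2 >= sigma_min^2 |x|^2; P is a contraction, so
     |v|^2 <= sigma_max^2 |x|^2.
   - |v|^2 = <x, g_J>, which with the lower bound gives
     sigma_min^4 |x|^2 <= |g_J|^2 <= |J| * max_j (g_j^2 / |P y|^2) * |P y|^2.
   - |x|^2 >= |J| z_min^2, and elementary algebra concludes. *)

Section DotProduct.
Variables (R : rcfType) (m : nat).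
Implicit Types (a b c : 'cV[R]_m).

Lemma dotvE a b : dotv a b = \sum_i a i 0 * b i 0.
Proof. by rewrite /dotv mxE; apply: eq_bigr => i _; rewrite mxE. Qed.

Lemma dotvC a b : dotv a b = dotv b a.
Proof. by rewrite !dotvE; apply: eq_bigr => i _; rewrite mulrC. Qed.

Lemma dotvDr a b c : dotv a (b + c) = dotv a b + dotv a c.
Proof. by rewrite /dotv mulmxDr mxE. Qed.

Lemma dotvNr a b : dotv a (- b) = - dotv a b.
Proof. by rewrite /dotv mulmxN mxE. Qed.

Lemma dotvZr (s : R) a b : dotv a (s *: b) = s * dotv a b.
Proof. by rewrite /dotv -scalemxAr mxE. Qed.

Lemma dotvBr a b c : dotv a (b - c) = dotv a b - dotv a c.
Proof. by rewrite dotvDr dotvNr. Qed.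

Lemma dotv0r a : dotv a 0 = 0.
Proof. by rewrite /dotv mulmx0 mxE. Qed.

Lemma dotvDl a b c : dotv (b + c) a = dotv b a + dotv c a.
Proof. by rewrite dotvC dotvDr ![dotv a _]dotvC. Qed.

Lemma dotvBl a b c : dotv (b - c) a = dotv b a - dotv c a.
Proof. by rewrite dotvC dotvBr ![dotv a _]dotvC. Qed.

Lemma dotvZl (s : R) a b : dotv (s *: a) b = s * dotv a b.
Proof. by rewrite dotvC dotvZr dotvC. Qed.

Lemma dotv_mulmx n (M : 'M[R]_(m, n)) a (x : 'cV[R]_n) :
  dotv a (M *m x) = dotv (M^T *m a) x.
Proof. by rewrite /dotv trmx_mul trmxK mulmxA. Qed.

Lemma dotv_col n (M : 'M[R]_(m, n)) j a : dotv (col j M) a = (M^T *m a) j 0.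
Proof. by rewrite /dotv tr_col -row_mul mxE. Qed.

Lemma sqnormE a : sqnorm a = \sum_i a i 0 ^+ 2.
Proof. by rewrite -[sqnorm a]/(dotv a a) dotvE; under eq_bigr do rewrite -expr2. Qed.

Lemma sqnorm_ge0 a : 0 <= sqnorm a.
Proof. by rewrite sqnormE; apply: sumr_ge0 => i _; rewrite sqr_ge0. Qed.

Lemma sqnorm_eq0 a : (sqnorm a == 0) = (a == 0).
Proof.
apply/idP/eqP => [|->]; last by rewrite /sqnorm mulmx0 mxE.
rewrite sqnormE psumr_eq0 => [/allP a0|i _]; last exact: sqr_ge0.
apply/matrixP => i j; rewrite ord1 mxE.
by have /implyP/(_ isT) := a0 i (mem_index_enum i); rewrite sqrf_eq0 => /eqP.
Qed.

Lemma sqnorm_gt0 a : a != 0 -> 0 < sqnorm a.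
Proof. by rewrite lt_def sqnorm_eq0 sqnorm_ge0 andbT. Qed.

Lemma sqnormD_orth a b : dotv a b = 0 -> sqnorm (a + b) = sqnorm a + sqnorm b.
Proof.
move=> ab0; rewrite -![sqnorm _]/(dotv _ _) dotvDl !dotvDr ab0 dotvC ab0.
by rewrite addr0 add0r.
Qed.

(* If s |a|^2 <= <a, b> with s >= 0, then s^2 |a|^2 <= |b|^2: a
   Cauchy-Schwarz-type estimate, read off from |s a - b|^2 >= 0. *)
Lemma sqnorm_ge_of_dotv (s : R) a b :
  0 <= s -> s * sqnorm a <= dotv a b -> s ^+ 2 * sqnorm a <= sqnorm b.
Proof.
move=> s0 hab; have := sqnorm_ge0 (s *: a - b).
rewrite -![sqnorm _]/(dotv _ _) in hab *.
rewrite dotvBl !dotvBr !dotvZl !dotvZr [dotv b a]dotvC.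
have := ler_wpM2l s0 hab; nra.
Qed.

End DotProduct.

Section SymmetricSpectral.
Local Open Scope sesquilinear_scope.
Variables (R : rcfType) (n : nat) (G : 'M[R]_n).
Hypothesis G_sym : G^T = G.

(* G is viewed as a hermitian complex matrix A = U^-1 diag(d) U with U
   unitary and d real; lambda i := Re (d i) are the eigenvalues of G. *)
Local Notation toC := (real_complex R).
Local Notation A := (map_mx toC G).
Local Notation U := (spectralmx A).
Local Notation d := (spectral_diag A).
Let lambda (i : 'I_n) : R := complex.Re (d 0 i).

Lemma conj_toC (r : R) : (toC r)^* = toC r.
Proof. by apply/CrealP/complex_realP; exists r. Qed.

Let A_herm : A \is hermsymmx.
Proof.
apply/is_hermitianmxP; rewrite expr0 scale1r map_trmx G_sym.
by apply/matrixP => i j; rewrite !mxE conj_toC.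
Qed.

Let A_diag : A = invmx U *m diag_mx d *m U.
Proof. exact/orthomx_spectralP/hermitian_normalmx. Qed.

Let U_unit : U \in unitmx. Proof. exact: spectral_unit. Qed.

Let U_inv : invmx U = U ^t*.
Proof. exact/invmx_unitary/spectral_unitarymx. Qed.

Let lambda_real i : (lambda i)%:C%C = d 0 i.
Proof. exact/RRe_real/(mxOverP (hermitian_spectral_diag_real A_herm)). Qed.

(* Each lambda i is an eigenvalue of G: row i of U is an eigenvector of A. *)
Lemma spectral_eigenvalue i : eigenvalue G (lambda i).
Proof.
suff : eigenvalue A (d 0 i).
  by rewrite !eigenvalue_root_char -lambda_real -map_char_poly fmorph_root.
apply/eigenvalueP; exists (delta_mx 0 i *m U).
  rewrite [X in _ *m X]A_diag !mulmxA (mulmxK U_unit) scalemxAl; congr (_ *m _).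
  by rewrite -rowE row_diag_mx.
apply/eqP => /(congr1 (mulmx^~ (invmx U))); rewrite (mulmxK U_unit) mul0mx.
by move/matrixP => /(_ 0 i); rewrite !mxE !eqxx /= => /eqP; rewrite oner_eq0.
Qed.

(* In the coordinates u = U x, the quadratic form of G is diagonal: both
   |x|^2 and x^T G x are sums over i of |u_i|^2, the latter weighted by
   lambda i. *)
Lemma spectral_quadratic_form (x : 'cV[R]_n) :
  exists c : 'I_n -> R, [/\ forall i, 0 <= c i,
     sqnorm x = \sum_i c i & dotv x (G *m x) = \sum_i lambda i * c i].
Proof.
set xC := map_mx toC x; set u := U *m xC.
have xCT : xC^t* = xC^T by apply/matrixP => a b; rewrite !mxE conj_toC.
have cR i : (complex.Re (u i 0 * (u i 0)^*))%:C%C = u i 0 * (u i 0)^*.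
  exact/RRe_real/ger0_real/mul_conjC_ge0.
have toC_entry (M : 'M[R]_1) : toC (M 0 0) = map_mx toC M 0 0 by rewrite mxE.
exists (fun i => complex.Re (u i 0 * (u i 0)^*)); split.
- by move=> i; rewrite -(@lecR R) cR mul_conjC_ge0.
- apply: (@complexI R); rewrite rmorph_sum /=; under eq_bigr do rewrite cR.
  rewrite toC_entry map_mxM -map_trmx -xCT.
  have -> : xC^t* *m xC = u^t* *m u.
    rewrite /u trmx_mul map_mxM mulmxA -(mulmxA _ _ U) -U_inv.
    by rewrite (mulVmx U_unit) mulmx1.
  by rewrite mxE; apply: eq_bigr => i _; rewrite !mxE mulrC.
- apply: (@complexI R); rewrite rmorph_sum /=.
  under eq_bigr do rewrite rmorphM /= lambda_real cR.
  rewrite toC_entry !map_mxM -map_trmx -xCT -[X in _ *m (X *m _)]/A.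
  rewrite [X in _ *m (X *m _)]A_diag U_inv.
  have -> : xC^t* *m (U^t* *m diag_mx d *m U *m xC) = u^t* *m (diag_mx d *m u).
    by rewrite /u trmx_mul map_mxM !mulmxA.
  rewrite mul_diag_mx mxE; apply: eq_bigr => i _.
  by rewrite !mxE mulrCA [_^* * _]mulrC.
Qed.

Lemma rayleigh_lower (lo : R) :
  (forall e, eigenvalue G e -> lo <= e) ->
  forall x, lo * sqnorm x <= dotv x (G *m x).
Proof.
move=> lo_le x; have [c [c0 -> ->]] := spectral_quadratic_form x.
rewrite mulr_sumr; apply: ler_sum => i _.
by rewrite ler_wpM2r ?lo_le ?spectral_eigenvalue.
Qed.

Lemma rayleigh_upper (hi : R) :
  (forall e, eigenvalue G e -> e <= hi) ->
  forall x, dotv x (G *m x) <= hi * sqnorm x.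
Proof.
move=> le_hi x; have [c [c0 -> ->]] := spectral_quadratic_form x.
rewrite mulr_sumr; apply: ler_sum => i _.
by rewrite ler_wpM2r ?le_hi ?spectral_eigenvalue.
Qed.

End SymmetricSpectral.

Section ExtremeSingularValues.
Variables (R : rcfType) (m k : nat) (Phi : 'M[R]_(m, k)).

Lemma sqnorm_mulmx (x : 'cV[R]_k) :
  sqnorm (Phi *m x) = dotv x ((Phi^T *m Phi) *m x).
Proof. by rewrite -[sqnorm _]/(dotv _ _) dotv_mulmx dotvC mulmxA. Qed.

Lemma gram_sym : (Phi^T *m Phi)^T = Phi^T *m Phi.
Proof. by rewrite trmx_mul trmxK. Qed.

Lemma sigma_min_bound (s : R) : is_sigma_min Phi s ->
  forall x, s ^+ 2 * sqnorm x <= sqnorm (Phi *m x).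
Proof. by case=> _ _ s_le x; rewrite sqnorm_mulmx rayleigh_lower ?gram_sym. Qed.

Lemma sigma_max_bound (s : R) : is_sigma_max Phi s ->
  forall x, sqnorm (Phi *m x) <= s ^+ 2 * sqnorm x.
Proof. by case=> _ _ le_s x; rewrite sqnorm_mulmx rayleigh_upper ?gram_sym. Qed.

End ExtremeSingularValues.

Section OrthogonalProjection.
Variables (R : rcfType) (m n : nat) (B : 'M[R]_(m, n)) (P : 'M[R]_m).
Hypothesis P_proj : orth_proj P (fun v => B^T *m v = 0).

Lemma proj_sym (a b : 'cV[R]_m) : dotv (P *m a) b = dotv a (P *m b).
Proof. by case: P_proj => PT _ _; rewrite dotv_mulmx PT. Qed.

Lemma proj_idem (a : 'cV[R]_m) : P *m (P *m a) = P *m a.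
Proof. by case: P_proj => _ PP _; rewrite mulmxA PP. Qed.

Lemma proj_orth_range (a : 'cV[R]_m) : B^T *m (P *m a) = 0.
Proof. by case: P_proj => _ _ PS; apply/PS; rewrite proj_idem. Qed.

Lemma proj_fix (v : 'cV[R]_m) : B^T *m v = 0 -> P *m v = v.
Proof. by case: P_proj => _ _ PS /PS. Qed.

(* The residual a - P a is orthogonal to P a, hence P is a contraction. *)
Lemma proj_resid_orth (a : 'cV[R]_m) : dotv (P *m a) (a - P *m a) = 0.
Proof. by rewrite proj_sym mulmxBr proj_idem subrr dotv0r. Qed.

Lemma proj_contract (a : 'cV[R]_m) : sqnorm (P *m a) <= sqnorm a.
Proof.
rewrite -{2}(subrKC (P *m a) a) sqnormD_orth ?proj_resid_orth //.
by rewrite lerDl sqnorm_ge0.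
Qed.

(* The residual lies in the column space of B: it is annihilated by the
   cokernel of B^T, whose columns are fixed by P. *)
Lemma proj_resid_range (a : 'cV[R]_m) : exists t, a - P *m a = B *m t.
Proof.
set C := cokermx B^T.
have PC j : P *m col j C = col j C.
  by apply: proj_fix; rewrite colE mulmxA mulmx_coker mul0mx.
have resC : (a - P *m a)^T *m C = 0.
  apply/matrixP => i j; rewrite ord1 [RHS]mxE.
  have -> : ((a - P *m a)^T *m C) 0 j = dotv (a - P *m a) (col j C).
    by rewrite /dotv [col j C]colE [in RHS]mulmxA -[in RHS]colE [RHS]mxE.
  by rewrite -PC -proj_sym mulmxBr proj_idem subrr /dotv trmx0 mul0mx mxE.
have : ((a - P *m a)^T <= B^T)%MS by rewrite submxE; apply/eqP.
by case/submxP => t tE; exists t^T; rewrite -[LHS]trmxK tE trmx_mul trmxK.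
Qed.

(* P annihilates the column space of B, since that space meets the range of
   P only in 0. *)
Lemma proj_kill_range (t : 'cV[R]_n) : P *m (B *m t) = 0.
Proof.
apply/eqP; rewrite -sqnorm_eq0; have [s sE] := proj_resid_range (B *m t).
have uE : P *m (B *m t) = B *m (t - s) by rewrite mulmxBr -sE opprB subrKC.
rewrite -[sqnorm _]/(dotv _ _) {2}uE dotv_mulmx proj_orth_range.
by rewrite dotvC dotv0r.
Qed.

End OrthogonalProjection.

Section CoordinateProjection.
Variables (R : rcfType) (k : nat).
Implicit Types (A : {set 'I_k}) (x y : 'cV[R]_k).

Definition coordproj A : 'M[R]_k := diag_mx (\row_i (i \in A)%:R).

Lemma coordproj_tr A : (coordproj A)^T = coordproj A.
Proof. exact: tr_diag_mx. Qed.

Lemma coordprojE A x i :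
  (coordproj A *m x) i 0 = if i \in A then x i 0 else 0.
Proof. by rewrite mul_diag_mx !mxE; case: (i \in A); rewrite ?mul1r ?mul0r. Qed.

Lemma coordproj_split A x : coordproj A *m x + coordproj (~: A) *m x = x.
Proof.
apply/colP => i; rewrite mxE !coordprojE in_setC.
by case: (i \in A); rewrite ?addr0 ?add0r.
Qed.

Lemma coordproj_idem A x :
  coordproj A *m (coordproj A *m x) = coordproj A *m x.
Proof. by apply/colP => i; rewrite !coordprojE; case: (i \in A). Qed.

Lemma coordproj_orth A x y :
  dotv (coordproj A *m x) (coordproj (~: A) *m y) = 0.
Proof.
rewrite dotvE big1 // => i _; rewrite !coordprojE in_setC.
by case: (i \in A); rewrite ?mulr0 ?mul0r.
Qed.

Lemma sqnorm_coordproj A x :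
  sqnorm (coordproj A *m x) = \sum_(i in A) x i 0 ^+ 2.
Proof.
rewrite sqnormE (bigID (mem A)) /= [X in _ + X]big1 ?addr0 => [|i /negbTE iA].
  by apply: eq_bigr => i iA; rewrite coordprojE iA.
by rewrite coordprojE iA expr0n.
Qed.

Lemma orth_cols_coordproj m (Phi : 'M[R]_(m, k)) A (v : 'cV[R]_m) :
  (forall i, i \in A -> dotv (col i Phi) v = 0)
  <-> (Phi *m coordproj A)^T *m v = 0.
Proof.
rewrite trmx_mul coordproj_tr -mulmxA; split => [h | /colP h i iA].
  by apply/colP => i; rewrite coordprojE [RHS]mxE -dotv_col; case: ifP => // /h.
by move: (h i); rewrite dotv_col coordprojE iA !mxE.
Qed.

End CoordinateProjection.
Arguments coordproj {R k} A.

Section Zmin.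
Variable R : rcfType.

Lemma foldr_min_le (s : seq R) h x : x \in s -> foldr Num.min h s <= x.
Proof.
elim: s => //= a s IH; rewrite inE ge_min => /predU1P[->|/IH->];
  by rewrite ?lexx ?orbT.
Qed.

Lemma foldr_min_ge0 (s : seq R) h :
  0 <= h -> {in s, forall x, 0 <= x} -> 0 <= foldr Num.min h s.
Proof.
move=> h0; elim: s => //= a s IH s0; rewrite le_min s0 ?mem_head //=.
by apply: IH => x xs; apply: s0; rewrite inE xs orbT.
Qed.

Variables (k : nat) (z : 'cV[R]_k).

Lemma zmin_le j : zmin z <= `|z j 0|.
Proof. by apply: foldr_min_le; apply: map_f; rewrite mem_enum. Qed.

Lemma zmin_ge0 : 0 <= zmin z.
Proof.
apply: foldr_min_ge0 => [|_ /mapP[i _ ->] //].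
by case: (enum 'I_k) => //= i _.
Qed.

Lemma sqnorm_coordproj_zmin (A : {set 'I_k}) :
  #|A|%:R * zmin z ^+ 2 <= sqnorm (coordproj A *m z).
Proof.
rewrite sqnorm_coordproj mulr_natl -sumr_const; apply: ler_sum => i _.
by rewrite -[z i 0 ^+ 2]real_normK ?num_real // lerXn2r ?nnegrE ?zmin_ge0 ?zmin_le.
Qed.

End Zmin.

(* The concluding estimate in elementary terms: with T = |x|^2, V = |v|^2,
   W = |w|^2, N = |g_J|^2 and n = |J| <= k, the bounds b T <= N <= n M (V+W),
   n Z <= T and V <= a T force M >= b Z / (a k Z + W). *)
Lemma ratio_lower_bound (R : realFieldType) (a b Z V W T N M n k : R) :
  0 <= a -> 0 <= b -> 0 <= Z -> 0 <= V -> 0 < W -> 1 <= n -> n <= k ->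
  b * T <= N -> N <= n * M * (V + W) -> n * Z <= T -> V <= a * T ->
  b * Z / (a * k * Z + W) <= M.
Proof.
move=> a0 b0 Z0 V0 W0 n1 nk bTN NM nZT VaT.
have T0 : 0 <= T by apply: le_trans nZT; nra.
have k0 : 0 <= k by lra.
have den0 : 0 < a * k * Z + W by rewrite ltr_wpDl ?mulr_ge0.
have nVW0 : 0 < n * (V + W) by nra.
have key : n * Z * (V + W) <= T * (a * k * Z + W).
  have : n * Z * V <= k * Z * (a * T) by rewrite ler_pM //; nra.
  nra.
set D := a * k * Z + W in den0 key *.
have bTD : b * T * D <= N * D by rewrite ler_pM2r.
have NDM : N * D <= n * (V + W) * (M * D) by nra.
rewrite ler_pdivrMr // -(ler_pM2l nVW0) (le_trans _ (le_trans bTD NDM)) //.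
have := ler_wpM2l b0 key; congr (_ <= _); ring.
Qed.

Section ProjectedSignal.
Variables (R : rcfType) (m k : nat) (Phi : 'M[R]_(m, k)) (I : {set 'I_k}).
Variable P : 'M[R]_m.
Hypothesis P_proj : orth_proj P (fun v => (Phi *m coordproj I)^T *m v = 0).

Local Notation J := (~: I).

(* Projecting y = Phi z + w kills the part of the signal carried by the
   columns in I and keeps the noise w, orthogonal to all columns of Phi. *)
Lemma proj_signal_split (z : 'cV[R]_k) (w : 'cV[R]_m) : Phi^T *m w = 0 ->
  P *m (Phi *m z + w) = P *m (Phi *m (coordproj J *m z)) + w.
Proof.
move=> PhiTw; rewrite mulmxDr (@proj_fix _ _ _ _ _ P_proj w); last first.
  by rewrite trmx_mul -mulmxA PhiTw mulmx0.
rewrite -{1}(coordproj_split I z) !mulmxDr (mulmxA Phi).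
by rewrite (proj_kill_range P_proj) add0r.
Qed.

Lemma proj_signal_orth_noise (x : 'cV[R]_k) (w : 'cV[R]_m) : Phi^T *m w = 0 ->
  dotv (P *m (Phi *m x)) w = 0.
Proof.
move=> PhiTw; rewrite (proj_sym P_proj) (proj_fix P_proj); last first.
  by rewrite trmx_mul -mulmxA PhiTw mulmx0.
by rewrite dotvC dotv_mulmx PhiTw dotvC dotv0r.
Qed.

(* Lower frame bound for the projected signal: on vectors supported outside
   I, P Phi loses at most what Phi loses.  Indeed P Phi x differs from Phi x
   by a vector in the span of the columns in I, i.e. P Phi x = Phi (x - t)
   with t supported on I, and |x - t| >= |x|. *)
Lemma proj_restricted_lower (c : R) :
  0 <= c -> (forall x, c * sqnorm x <= sqnorm (Phi *m x)) ->
  forall x, c * sqnorm (coordproj J *m x)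
              <= sqnorm (P *m (Phi *m (coordproj J *m x))).
Proof.
move=> c0 hc x; set x' := coordproj J *m x.
have [t tE] := proj_resid_range P_proj (Phi *m x').
have -> : P *m (Phi *m x') = Phi *m (x' - coordproj I *m t).
  by rewrite mulmxBr (mulmxA Phi (coordproj I)) -tE opprB subrKC.
apply: le_trans (hc _); rewrite ler_wpM2l // sqnormD_orth ?lerDl ?sqnorm_ge0 //.
by rewrite dotvNr dotvC coordproj_orth oppr0.
Qed.

Lemma proj_signal_energy (x : 'cV[R]_k) :
  let v := P *m (Phi *m (coordproj J *m x)) in
  sqnorm v = dotv (coordproj J *m x) (coordproj J *m (Phi^T *m v)).
Proof.
move=> v; rewrite dotv_mulmx coordproj_tr coordproj_idem -[sqnorm v]/(dotv v v).
by rewrite {1}/v (proj_sym P_proj) (proj_idem P_proj) -/v dotvC dotv_mulmx dotvC.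
Qed.

Lemma proj_signal_correlation (c : R) :
  0 <= c -> (forall x, c * sqnorm x <= sqnorm (Phi *m x)) ->
  forall x, c ^+ 2 * sqnorm (coordproj J *m x)
    <= sqnorm (coordproj J *m (Phi^T *m (P *m (Phi *m (coordproj J *m x))))).
Proof.
move=> c0 hc x; apply: sqnorm_ge_of_dotv => //.
by rewrite -proj_signal_energy proj_restricted_lower.
Qed.

End ProjectedSignal.

Lemma sqnorm_correlations_le (R : rcfType) (m k : nat) (Phi : 'M[R]_(m, k))
    (A : {set 'I_k}) (u : 'cV[R]_m) : 0 < sqnorm u ->
  sqnorm (coordproj A *m (Phi^T *m u))
    <= #|A|%:R * \big[Num.max/0]_(j < k) (dotv (col j Phi) u ^+ 2 / sqnorm u)
       * sqnorm u.
Proof.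
move=> u_gt0; rewrite sqnorm_coordproj -mulrA mulr_natl -sumr_const.
apply: ler_sum => j _; rewrite -ler_pdivrMr // -dotv_col; exact: le_bigmax.
Qed.

Theorem mainTheorem7 (R : rcfType) (m k : nat) (Phi : 'M[R]_(m, k))
  (z : 'cV[R]_k) (w : 'cV[R]_m) (I : {set 'I_k}) (P : 'M[R]_m)
  (smin smax : R) :
  \rank Phi = k ->
  w != 0 ->
  (forall j : 'I_k, dotv (col j Phi) w = 0) ->
  I \proper setT ->
  orth_proj P (fun v => forall i, i \in I -> dotv (col i Phi) v = 0) ->
  is_sigma_min Phi smin ->
  is_sigma_max Phi smax ->
  let y := Phi *m z + w in
  \big[Num.max/0]_(j < k)
     ((dotv (col j Phi) (P *m y)) ^+ 2 / sqnorm (P *m y))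
  >= smin ^+ 4 * zmin z ^+ 2
     / (smax ^+ 2 * k%:R * zmin z ^+ 2 + sqnorm w).
Proof.
move=> _ w_neq0 w_orth I_proper [PT PP PS] smin_Phi smax_Phi /=.
set y := Phi *m z + w; set J := ~: I; set x := coordproj J *m z.
set v := P *m (Phi *m x).
have P_proj : orth_proj P (fun v => (Phi *m coordproj I)^T *m v = 0).
  by split=> // u; rewrite PS orth_cols_coordproj.
have PhiTw : Phi^T *m w = 0 by apply/colP => j; rewrite -dotv_col w_orth mxE.
have Py : P *m y = v + w := proj_signal_split P_proj z PhiTw.
have Sy : sqnorm (P *m y) = sqnorm v + sqnorm w.
  by rewrite Py sqnormD_orth // (proj_signal_orth_noise P_proj x PhiTw).
have v_up : sqnorm v <= smax ^+ 2 * sqnorm x.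
  exact: le_trans (proj_contract P_proj _) (sigma_max_bound smax_Phi x).
have g_low :
    smin ^+ 4 * sqnorm x <= sqnorm (coordproj J *m (Phi^T *m (P *m y))).
  rewrite Py mulmxDr PhiTw addr0 (_ : 4 = 2 * 2)%N // exprM.
  by move: (proj_signal_correlation P_proj (sqr_ge0 _) (sigma_min_bound smin_Phi) z).
have Sy_gt0 : 0 < sqnorm (P *m y) by rewrite Sy ltr_wpDl ?sqnorm_ge0 ?sqnorm_gt0.
have := sqnorm_correlations_le Phi J Sy_gt0; rewrite Sy => g_up.
have J_gt0 : (0 < #|J|)%N.
  by case/properP: I_proper => _ [j _ jI]; apply/card_gt0P; exists j; rewrite inE.
apply: (ratio_lower_bound _ _ _ _ _ _ _ g_low g_up (sqnorm_coordproj_zmin z J) v_up).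
all: rewrite ?sqr_ge0 ?exprn_even_ge0 ?sqnorm_ge0 ?sqnorm_gt0 ?ler1n //.
by rewrite ler_nat -[k in (_ <= k)%N]card_ord max_card.
Qed.
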